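(* Let $C$ be an ordered field and let $\mathbb{M}$ be a model of $T_{\mathrm{Ham}}$ with underlying set $G_\infty$. Then there are (1) a definable subset $H\subseteq G$ which is $C$-linearly independent and dense in $(G,<_0)$, and (2) a definable subset $S\subsetneq G$ which is the underlying set of an elementary substructure of the ordered $C$-vector space $(G;+,<_0,(\lambda_c)_{c\in C})$.
   Context: Let $C$ be an ordered field. A Hamel space over $C$ is a $C$-vector space $G$ with two total orderings $<_0,<_1$, each making $G$ an ordered $C$-vector space, and a map $v:G\to G_\infty=G\cup\{\infty\}$ ($G<_0\infty$, $G<_1\infty$) such that for all $x,y\in G$, $\lambda\in C^{\times}$: $v(x)=\infty$ iff $x=0$; $v(x+y)\ge_0\min_0(v(x),v(y))$; $v(\lambda x)=v(x)$; $0<_1x<_1y\Rightarrow v(x)\ge_0v(y)$; $v(v(x))=v(x)$ (with $v(\infty)=\infty$); $v(x)>_10$. It is independent if for all $a_0<_0b_0$, $a_1<_1b_1$ in $G\cup\{\pm\infty\}$ some $z\in G$ has $a_0<_0z<_0b_0$, $a_1<_1z<_1b_1$; dense if for all $a<_0b$ in $G$ some $c$ has $a<_0v(c)<_0b$. $T_{\mathrm{Ham}}$ is the theory in the language $\{0,+,(\lambda_c)_{c\in C},<_0,<_1,v,\infty\}$ on universe $G_\infty$ (with $\infty$ absorbing for $+$, $\lambda_c$, $v$) whose models are exactly the independent dense Hamel spaces over $C$; ''definable'' refers to this language. $\lambda_c$ denotes scalar multiplication by $c$. *)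

From HB Require Import structures.
From mathcomp Require Import all_boot all_order all_algebra.
Set Implicit Arguments. Unset Strict Implicit. Unset Printing Implicit Defensive.
Import Order.TTheory GRing.Theory Num.Theory.
Local Open Scope ring_scope.

Section Hamel.
Variable C : realFieldType.
Variable G : lmodType C.

(** Extended universe G_oo = G ∪ {oo}, encoded as [option G], [None] = oo. *)
Definition ext_lt (lt : G -> G -> Prop) (a b : option G) : Prop :=
  match a, b with
  | Some x, Some y => lt x y
  | Some _, None => True
  | None, _ => False
  end.
Definition ext_le (lt : G -> G -> Prop) (a b : option G) : Prop :=
  ext_lt lt a b \/ a = b.

Definition ordered_vs (lt : G -> G -> Prop) : Prop :=
  [/\ (forall x, ~ lt x x),
      (forall x y z, lt x y -> lt y z -> lt x z),
      (forall x y, x <> y -> lt x y \/ lt y x),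
      (forall x y z, lt x y -> lt (x + z) (y + z)) &
      (forall (c : C) x, 0 < c -> lt 0 x -> lt 0 (c *: x))].

Definition ext_v (v : G -> option G) (a : option G) : option G :=
  match a with Some x => v x | None => None end.

Definition hamel_space (lt0 lt1 : G -> G -> Prop) (v : G -> option G) : Prop :=
  [/\ ordered_vs lt0, ordered_vs lt1,
      (forall x, v x = None <-> x = 0),
      (forall x y, ext_le lt0 (v x) (v (x + y)) \/ ext_le lt0 (v y) (v (x + y))) &
      (forall (c : C) x, c != 0 -> v (c *: x) = v x)] /\
  [/\ (forall x y, lt1 0 x -> lt1 x y -> ext_le lt0 (v y) (v x)),
      (forall x, ext_v v (v x) = v x) &
      (forall x, ext_lt lt1 (Some 0) (v x))].

(** Bounds in G ∪ {-oo,+oo}: a lower bound [None] means -oo, an upper bound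
    [None] means +oo. *)
Definition lb_lt (lt : G -> G -> Prop) (a : option G) (z : G) : Prop :=
  if a is Some x then lt x z else True.
Definition ub_lt (lt : G -> G -> Prop) (z : G) (b : option G) : Prop :=
  if b is Some y then lt z y else True.
Definition bnd_lt (lt : G -> G -> Prop) (a b : option G) : Prop :=
  match a, b with Some x, Some y => lt x y | _, _ => True end.

Definition independent (lt0 lt1 : G -> G -> Prop) : Prop :=
  forall a0 b0 a1 b1 : option G,
    bnd_lt lt0 a0 b0 -> bnd_lt lt1 a1 b1 ->
    exists z, [/\ lb_lt lt0 a0 z, ub_lt lt0 z b0, lb_lt lt1 a1 z & ub_lt lt1 z b1].

Definition dense_val (lt0 : G -> G -> Prop) (v : G -> option G) : Prop :=
  forall a b, lt0 a b -> exists c, ext_lt lt0 (Some a) (v c) /\ ext_lt lt0 (v c) (Some b).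

Definition ham_model (lt0 lt1 : G -> G -> Prop) (v : G -> option G) : Prop :=
  [/\ hamel_space lt0 lt1 v, independent lt0 lt1 & dense_val lt0 v].

Inductive hterm : Type :=
| HVar of nat | HZero | HInf | HAdd of hterm & hterm
| HScal of C & hterm | HVal of hterm.

Inductive hform : Type :=
| HEq of hterm & hterm | HLt0 of hterm & hterm | HLt1 of hterm & hterm
| HNot of hform | HAnd of hform & hform | HEx of nat & hform.

Definition upd {T} (e : nat -> T) (n : nat) (x : T) : nat -> T :=
  fun m => if m == n then x else e m.

Fixpoint heval (v : G -> option G) (e : nat -> option G) (t : hterm) : option G :=
  match t with
  | HVar n => e n
  | HZero => Some 0
  | HInf => None
  | HAdd s u =>
      match heval v e s, heval v e u with
      | Some x, Some y => Some (x + y) | _, _ => None end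
  | HScal c s => if heval v e s is Some x then Some (c *: x) else None
  | HVal s => ext_v v (heval v e s)
  end.

Fixpoint hsat (lt0 lt1 : G -> G -> Prop) (v : G -> option G)
    (e : nat -> option G) (f : hform) : Prop :=
  match f with
  | HEq s u => heval v e s = heval v e u
  | HLt0 s u => ext_lt lt0 (heval v e s) (heval v e u)
  | HLt1 s u => ext_lt lt1 (heval v e s) (heval v e u)
  | HNot g => ~ hsat lt0 lt1 v e g
  | HAnd g h => hsat lt0 lt1 v e g /\ hsat lt0 lt1 v e h
  | HEx n g => exists x : option G, hsat lt0 lt1 v (upd e n x) g
  end.

(** Definable (with parameters) subsets of the universe G_oo: the formula's
    variable 0 is the free variable, the other variables are parameters. *)
Definition ham_definable (lt0 lt1 : G -> G -> Prop) (v : G -> option G)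
    (X : option G -> Prop) : Prop :=
  exists (f : hform) (p : nat -> option G),
    forall a : option G, X a <-> hsat lt0 lt1 v (upd p 0 a) f.

Definition in_G (S : G -> Prop) (a : option G) : Prop :=
  if a is Some x then S x else False.

Definition lin_indep (H : G -> Prop) : Prop :=
  forall (s : seq G) (c : 'I_(size s) -> C),
    uniq s -> (forall x, x \in s -> H x) ->
    \sum_(i < size s) c i *: s`_i = 0 -> forall i, c i = 0.

Definition dense_in (lt : G -> G -> Prop) (H : G -> Prop) : Prop :=
  forall a b, lt a b -> exists h, [/\ H h, lt a h & lt h b].

(** Language {0,+,<_0,(λ_c)} of ordered C-vector spaces (reduct), with
    satisfaction relative to a domain D ⊆ G (quantifiers range over D). *)
Inductive vterm : Type :=
| VVar of nat | VZero | VAdd of vterm & vterm | VScal of C & vterm.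

Inductive vform : Type :=
| VEq of vterm & vterm | VLt of vterm & vterm
| VNot of vform | VAnd of vform & vform | VEx of nat & vform.

Fixpoint veval (e : nat -> G) (t : vterm) : G :=
  match t with
  | VVar n => e n
  | VZero => 0
  | VAdd s u => veval e s + veval e u
  | VScal c s => c *: veval e s
  end.

Fixpoint vsat (lt : G -> G -> Prop) (D : G -> Prop) (e : nat -> G) (f : vform) : Prop :=
  match f with
  | VEq s u => veval e s = veval e u
  | VLt s u => lt (veval e s) (veval e u)
  | VNot g => ~ vsat lt D e g
  | VAnd g h => vsat lt D e g /\ vsat lt D e h
  | VEx n g => exists x, D x /\ vsat lt D (upd e n x) g
  end.

Definition elem_substructure (lt : G -> G -> Prop) (S : G -> Prop) : Prop :=
  [/\ S 0,
      (forall x y, S x -> S y -> S (x + y)),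
      (forall (c : C) x, S x -> S (c *: x)) &
      (forall (f : vform) (e : nat -> G), (forall n, S (e n)) ->
         (vsat lt S e f <-> vsat lt (fun _ => True) e f))].

End Hamel.

From mathcomp Require Import all_boot all_order all_algebra.
From Stdlib Require Import Classical.
From Stdlib Require List.
Set Implicit Arguments. Unset Strict Implicit. Unset Printing Implicit Defensive.
Import Order.TTheory GRing.Theory Num.Theory.
Local Open Scope ring_scope.

(* The fixed points of v are C-linearly independent: by the ultrametric
   inequality, the value of a nontrivial combination of distinct fixed points
   is its least fixed point with a nonzero coefficient, hence not oo.  They are
   dense because every value of v is a fixed point and the values are dense.

   For y <> 0, the ball {x | v y <= v x} is a nonzero proper C-subspace
   (proper by density of the values).  A nonzero subspace of an ordered
   C-vector space is an elementary substructure: the theory of nontrivial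
   ordered vector spaces eliminates quantifiers (Ferrante-Rackoff: exists x, f
   is equivalent to f at x = -oo, at x = +oo, or at a midpoint of two roots of
   the atoms of f), and quantifier-free formulas are absolute. *)

Lemma exists_maximal (T : Type) (R : T -> T -> Prop) (P : T -> Prop) (s : seq T) :
  (forall a, ~ R a a) -> (forall a b c, R a b -> R b c -> R a c) ->
  (exists a, List.In a s /\ P a) ->
  exists a, [/\ List.In a s, P a & forall b, List.In b s -> P b -> ~ R a b].
Proof.
move=> Rirr Rtrans; elim: s => [[a [[] _]]|a s IH [b [bs Pb]]].
have [/IH [m [ms Pm mmax]]|none] := classic (exists b, List.In b s /\ P b).
  have [[Pa Rma]|notRma] := classic (P a /\ R m a).
    exists a; split=> [||c [<-|cs] Pc Rac]; [by left|by []|exact: Rirr Rac|].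
    exact: mmax c cs Pc (Rtrans _ _ _ Rma Rac).
  exists m; split=> [||c [<-|cs] Pc]; [by right|by []| |exact: mmax].
  by move=> Rma; apply: notRma.
have Pa : P a by case: bs => [->|bs] //; case: none; exists b.
exists a; split=> [||c [<-|cs] Pc]; [by left|by []|exact: Rirr|].
by case: none; exists c.
Qed.

Definition subspace (R : pzRingType) (V : lmodType R) (D : V -> Prop) :=
  [/\ D 0, forall x y, D x -> D y -> D (x + y) & forall a x, D x -> D (a *: x)].

Section QuantifierElimination.
Variable C : realFieldType.
Implicit Types (n : nat) (s t u : vterm C) (f g : vform C).

Fixpoint vcoef n t : C :=
  match t with
  | VVar m => if m == n then 1 else 0
  | VZero => 0
  | VAdd s u => vcoef n s + vcoef n u
  | VScal c s => c * vcoef n s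
  end.

Fixpoint vsubst n u t : vterm C :=
  match t with
  | VVar m => if m == n then u else VVar C m
  | VZero => VZero C
  | VAdd s w => VAdd (vsubst n u s) (vsubst n u w)
  | VScal c s => VScal c (vsubst n u s)
  end.

(* Only meant for quantifier-free formulas: bound variables are not renamed. *)
Fixpoint vfsubst n u f : vform C :=
  match f with
  | VEq s t => VEq (vsubst n u s) (vsubst n u t)
  | VLt s t => VLt (vsubst n u s) (vsubst n u t)
  | VNot g => VNot (vfsubst n u g)
  | VAnd g h => VAnd (vfsubst n u g) (vfsubst n u h)
  | VEx m g => VEx m g
  end.

Fixpoint qfree f : bool :=
  match f with
  | VEq _ _ | VLt _ _ => true
  | VNot g => qfree g
  | VAnd g h => qfree g && qfree h
  | VEx _ _ => false
  end.

Definition slope n s t : C := vcoef n s - vcoef n t.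

Definition atom_root n s t : vterm C :=
  VScal (- (slope n s t)^-1)
    (VAdd (vsubst n (VZero C) s) (VScal (-1) (vsubst n (VZero C) t))).

Fixpoint roots n f : seq (vterm C) :=
  match f with
  | VEq s t | VLt s t => if slope n s t == 0 then [::] else [:: atom_root n s t]
  | VNot g => roots n g
  | VAnd g h => List.app (roots n g) (roots n h)
  | VEx _ _ => [::]
  end.

Definition vtrue : vform C := VEq (VZero C) (VZero C).
Definition vbool (b : bool) : vform C := if b then vtrue else VNot vtrue.
Definition vor f g : vform C := VNot (VAnd (VNot f) (VNot g)).
Definition vbigor (fs : seq (vform C)) : vform C := foldr vor (vbool false) fs.

(* The truth value of [f] for [x_n] below ([up = false]) or above
   ([up = true]) all the roots of its atoms. *)
Fixpoint at_infty n (up : bool) f : vform C :=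
  match f with
  | VEq s t => if slope n s t == 0
               then VEq (vsubst n (VZero C) s) (vsubst n (VZero C) t)
               else vbool false
  | VLt s t => if slope n s t == 0
               then VLt (vsubst n (VZero C) s) (vsubst n (VZero C) t)
               else vbool ((0 < slope n s t) != up)
  | VNot g => VNot (at_infty n up g)
  | VAnd g h => VAnd (at_infty n up g) (at_infty n up h)
  | VEx m g => VEx m g
  end.

Definition vmid r1 r2 : vterm C := VScal 2^-1 (VAdd r1 r2).

Definition midpoints (rs : seq (vterm C)) : seq (vterm C) :=
  List.map (fun r => vmid r.1 r.2) (List.list_prod rs rs).

Definition elim_ex n f : vform C :=
  vor (at_infty n false f)
    (vor (at_infty n true f)
       (vbigor (List.map (fun u => vfsubst n u f) (midpoints (roots n f))))).

Fixpoint qe f : vform C :=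
  match f with
  | VEq s t => VEq s t
  | VLt s t => VLt s t
  | VNot g => VNot (qe g)
  | VAnd g h => VAnd (qe g) (qe h)
  | VEx n g => elim_ex n (qe g)
  end.

Lemma In_midpoints r1 r2 rs :
  List.In r1 rs -> List.In r2 rs -> List.In (vmid r1 r2) (midpoints rs).
Proof.
move=> r1_in r2_in; apply: (List.in_map (fun r => vmid r.1 r.2) _ (r1, r2)).
exact: List.in_prod.
Qed.

Lemma qfree_vfsubst n u f : qfree f -> qfree (vfsubst n u f).
Proof. by elim: f => //= g IHg h IHh /andP[/IHg-> /IHh->]. Qed.

Lemma qfree_at_infty n up f : qfree f -> qfree (at_infty n up f).
Proof.
elim: f => [s t|s t|g IHg|g IHg h IHh|//] /=;
  try by move=> _; rewrite /vbool; do 2?case: ifP.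
- exact: IHg.
- by move=> /andP[/IHg-> /IHh->].
Qed.

Lemma qfree_elim_ex n f : qfree f -> qfree (elim_ex n f).
Proof.
move=> qf_f; rewrite /= !qfree_at_infty //=.
by elim: (midpoints _) => //= u us ->; rewrite qfree_vfsubst.
Qed.

Lemma qfree_qe f : qfree (qe f).
Proof. by elim: f => //= [g -> h ->|n g /(qfree_elim_ex n)]. Qed.

End QuantifierElimination.

Section OrderedVectorSpace.
Variables (C : realFieldType) (G : lmodType C) (lt : G -> G -> Prop).
Hypothesis ovs : ordered_vs lt.

Lemma ovs_irr x : ~ lt x x. Proof. by case: ovs => h _ _ _ _; apply: h. Qed.
Lemma ovs_trans x y z : lt x y -> lt y z -> lt x z.
Proof. by case: ovs => _ h _ _ _; apply: h. Qed.
Lemma ovs_total x y : x <> y -> lt x y \/ lt y x.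
Proof. by case: ovs => _ _ h _ _; apply: h. Qed.
Lemma ovs_addr x y z : lt x y -> lt (x + z) (y + z).
Proof. by case: ovs => _ _ _ h _; apply: h. Qed.
Lemma ovs_scale_gt0 c x : 0 < c -> lt 0 x -> lt 0 (c *: x).
Proof. by case: ovs => _ _ _ _ h; apply: h. Qed.

Lemma ovs_asym x y : lt x y -> ~ lt y x.
Proof. by move=> xy yx; apply: ovs_irr (ovs_trans xy yx). Qed.

Lemma ovs_nlt_lt_trans x y z : ~ lt y x -> lt y z -> lt x z.
Proof.
move=> nyx yz; have [->//|/ovs_total[xy|//]] := classic (x = y).
exact: ovs_trans xy yz.
Qed.

Lemma ovs_lt_nlt_trans x y z : lt x y -> ~ lt z y -> lt x z.
Proof.
move=> xy nzy; have [<-//|/ovs_total[yz|//]] := classic (y = z).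
exact: ovs_trans xy yz.
Qed.

Lemma ovs_subr_gt0 x y : lt 0 (y - x) <-> lt x y.
Proof.
split=> [|xy]; last by have := ovs_addr (- x) xy; rewrite subrr.
by move=> /(ovs_addr x); rewrite add0r subrK.
Qed.

Lemma ovs_subr_lt0 x y : lt (x - y) 0 <-> lt x y.
Proof.
split=> [|xy]; last by have := ovs_addr (- y) xy; rewrite subrr.
by move=> /(ovs_addr y); rewrite add0r subrK.
Qed.

Lemma ovs_oppr_gt0 x : lt 0 (- x) <-> lt x 0.
Proof. by rewrite -(ovs_subr_gt0 x 0) sub0r. Qed.

Lemma ovs_oppr_lt0 x : lt (- x) 0 <-> lt 0 x.
Proof. by rewrite -(ovs_subr_lt0 0 x) sub0r. Qed.

Lemma ovs_trichotomy x : [\/ lt x 0, x = 0 | lt 0 x].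
Proof.
have [->|/ovs_total[]] := classic (x = 0);
  by [constructor 2|constructor 1|constructor 3].
Qed.

Lemma ovs_gt0_or_opp x : x <> 0 -> lt 0 x \/ lt 0 (- x).
Proof. by move=> x0; rewrite ovs_oppr_gt0; case: (ovs_total x0); [right|left]. Qed.

Lemma ovs_pscale_lt0 c x : 0 < c -> lt (c *: x) 0 <-> lt x 0.
Proof.
move=> c_gt0; split=> [cx_lt0|x_lt0]; last first.
  by rewrite -ovs_oppr_gt0 -scalerN; apply: ovs_scale_gt0; rewrite ?ovs_oppr_gt0.
case: (ovs_trichotomy x) => [//|x0|x_gt0].
  by move: cx_lt0; rewrite x0 scaler0 => /ovs_irr.
by case: (ovs_asym cx_lt0); apply: ovs_scale_gt0.
Qed.

Lemma ovs_scale_lt0 c x :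
  c != 0 -> lt (c *: x) 0 <-> (if 0 < c then lt x 0 else lt 0 x).
Proof.
move=> c0; case: ifPn => [|c_le0]; first exact: ovs_pscale_lt0.
have c_lt0 : 0 < - c by rewrite oppr_gt0 lt_neqAle c0 leNgt.
by rewrite -[c]opprK scaleNr -scalerN ovs_pscale_lt0 // ovs_oppr_lt0.
Qed.

Lemma scale_half_double (x : G) : (2 : C)^-1 *: (x + x) = x.
Proof. by rewrite -mulr2n -scaler_nat scalerA mulVf ?pnatr_eq0 // scale1r. Qed.

Lemma ovs_midpoint x y :
  lt x y -> lt x ((2 : C)^-1 *: (x + y)) /\ lt ((2 : C)^-1 *: (x + y)) y.
Proof.
move=> /ovs_subr_gt0 xy; have half_gt0 : (0 : C) < 2^-1 by rewrite invr_gt0 ltr0n.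
split; apply/ovs_subr_gt0.
  rewrite -{2}(scale_half_double x) -scalerBr opprD addrACA subrr add0r.
  exact: ovs_scale_gt0.
rewrite -{1}(scale_half_double y) -scalerBr opprD addrACA subrr addr0.
exact: ovs_scale_gt0.
Qed.

Definition same_side (r x y : G) :=
  [/\ lt x r <-> lt y r, x = r <-> y = r & lt r x <-> lt r y].

Lemma same_side_below r x y : lt x r -> lt y r -> same_side r x y.
Proof.
move=> xr yr; split; [by []| |].
  by split=> eq_r; [move: xr | move: yr]; rewrite eq_r => /ovs_irr.
by split=> /ovs_asym.
Qed.

Lemma same_side_above r x y : lt r x -> lt r y -> same_side r x y.
Proof.
move=> rx ry; split; [by split=> /ovs_asym| |by []].
by split=> eq_r; [move: rx | move: ry]; rewrite eq_r => /ovs_irr.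
Qed.

Implicit Types (D : G -> Prop) (e : nat -> G) (x y : G) (n : nat).
Implicit Types (s t u r : vterm C) (f g : vform C).

Lemma veval_upd_linear e n x t :
  veval (upd e n x) t = vcoef n t *: x + veval (upd e n 0) t.
Proof.
elim: t => [m||s IHs t IHt|c s IHs] /=.
- by rewrite /upd; case: eqP => _; rewrite ?scale1r ?addr0 ?scale0r ?add0r.
- by rewrite scale0r addr0.
- by rewrite IHs IHt scalerDl addrACA.
- by rewrite IHs scalerDr scalerA.
Qed.

Lemma veval_vsubst e n u t :
  veval e (vsubst n u t) = veval (upd e n (veval e u)) t.
Proof.
elim: t => [m||s IHs t IHt|c s IHs] //=; last by rewrite IHs.
  by rewrite /upd; case: eqP.
by rewrite IHs IHt.
Qed.

Lemma veval_closed D e t : subspace D -> (forall m, D (e m)) -> D (veval e t).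
Proof. by case=> D0 DD DZ De; elim: t => //= *; auto. Qed.

Lemma vsat_vfsubst D e n u f : qfree f ->
  vsat lt D e (vfsubst n u f) <-> vsat lt D (upd e n (veval e u)) f.
Proof.
elim: f => [s t|s t|g IHg|g IHg h IHh|//] /= qf_f; rewrite ?veval_vsubst //.
  by rewrite IHg.
by case/andP: qf_f => /IHg-> /IHh->.
Qed.

Lemma veval_upd_diff e n x s t :
  veval (upd e n x) s - veval (upd e n x) t =
  slope n s t *: x + (veval e (vsubst n (VZero C) s) - veval e (vsubst n (VZero C) t)).
Proof.
rewrite (veval_upd_linear e n x s) (veval_upd_linear e n x t) !veval_vsubst.
by rewrite /slope scalerBl opprD addrACA.
Qed.

Lemma veval_upd_diff_flat e n x s t : slope n s t = 0 ->
  veval (upd e n x) s - veval (upd e n x) t =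
  veval e (vsubst n (VZero C) s) - veval e (vsubst n (VZero C) t).
Proof. by move=> s0; rewrite veval_upd_diff s0 scale0r add0r. Qed.

Lemma veval_upd_diff_root e n x s t : slope n s t != 0 ->
  veval (upd e n x) s - veval (upd e n x) t =
  slope n s t *: (x - veval e (atom_root n s t)).
Proof.
move=> s0; rewrite veval_upd_diff /= scalerBr scalerA mulrN mulfV //.
by rewrite scaleN1r opprK scaleN1r.
Qed.

Lemma vsat_VEq D e s t : vsat lt D e (VEq s t) <-> veval e s - veval e t = 0.
Proof. by split=> [/= ->|/eqP]; rewrite ?subrr // subr_eq0 => /eqP. Qed.

Lemma vsat_VLt D e s t : vsat lt D e (VLt s t) <-> lt (veval e s - veval e t) 0.
Proof. by rewrite ovs_subr_lt0. Qed.

Lemma vsat_VEq_upd_root D e n x s t : slope n s t != 0 ->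
  vsat lt D (upd e n x) (VEq s t) <-> x = veval e (atom_root n s t).
Proof.
move=> s0; rewrite vsat_VEq veval_upd_diff_root //.
split=> [/eqP|->]; last by rewrite subrr scaler0.
by rewrite scaler_eq0 (negbTE s0) subr_eq0 => /eqP.
Qed.

Lemma vsat_VLt_upd_root D e n x s t : slope n s t != 0 ->
  vsat lt D (upd e n x) (VLt s t) <->
  if 0 < slope n s t then lt x (veval e (atom_root n s t))
  else lt (veval e (atom_root n s t)) x.
Proof.
move=> s0; rewrite vsat_VLt veval_upd_diff_root // ovs_scale_lt0 //.
by case: ifP => _; [exact: ovs_subr_lt0 | exact: ovs_subr_gt0].
Qed.

Lemma vsat_vbool D e b : vsat lt D e (vbool C b) <-> b.
Proof. by case: b => /=; split=> //; apply. Qed.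

Lemma vsat_vor D e f g : vsat lt D e (vor f g) <-> vsat lt D e f \/ vsat lt D e g.
Proof.
split=> [|[fe [nf _]|ge [_ ng]] //].
by move=> nfg; apply: NNPP => nfg'; apply: nfg; split=> ?; apply: nfg'; [left|right].
Qed.

Lemma vsat_vbigor D e fs :
  vsat lt D e (vbigor fs) <-> exists2 f, List.In f fs & vsat lt D e f.
Proof.
elim: fs => [|f fs IH]; first by rewrite vsat_vbool; split=> // -[].
rewrite -[vbigor _]/(vor f (vbigor fs)) vsat_vor IH.
split=> [[fe|[g g_in ge]]|[g [<-|g_in] ge]].
- by exists f; first left.
- by exists g; first right.
- by left.
- by right; exists g.
Qed.

Lemma vsat_upd_same_side D e n x y f : qfree f ->
  (forall r, List.In r (roots n f) -> same_side (veval e r) x y) ->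
  vsat lt D (upd e n x) f <-> vsat lt D (upd e n y) f.
Proof.
elim: f => [s t|s t|g IHg|g IHg h IHh|//] qf_f side.
1,2: have [s0|s0] := eqVneq (slope n s t) 0;
  [by rewrite ?vsat_VEq ?vsat_VLt !veval_upd_diff_flat
  |have [ltr eqr gtr] : same_side (veval e (atom_root n s t)) x y
     by apply: side; rewrite /= (negbTE s0); left].
- by rewrite !vsat_VEq_upd_root.
- by rewrite !vsat_VLt_upd_root //; case: ifP.
- by rewrite /= (IHg qf_f side).
- case/andP: qf_f => qf_g qf_h.
  rewrite /= (IHg qf_g) ?(IHh qf_h) // => r r_in; apply: side;
    apply: List.in_or_app; by [right|left].
Qed.

Lemma vsat_at_infty D e n x (up : bool) f : qfree f ->
  (forall r, List.In r (roots n f) ->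
     if up then lt (veval e r) x else lt x (veval e r)) ->
  vsat lt D e (at_infty n up f) <-> vsat lt D (upd e n x) f.
Proof.
elim: f => [s t|s t|g IHg|g IHg h IHh|//] qf_f beyond.
1,2: have [s0|s0] := eqVneq (slope n s t) 0;
  [by rewrite [at_infty _ _ _]/= s0 eqxx ?vsat_VEq ?vsat_VLt veval_upd_diff_flat
  |have := beyond (atom_root n s t); rewrite [roots _ _]/= (negbTE s0);
   move=> /(_ (or_introl erefl)) beyond_r; rewrite [at_infty _ _ _]/= (negbTE s0)].
- rewrite vsat_VEq_upd_root //; split=> [/(_ erefl) []|x_r].
  by clear beyond; move: beyond_r; rewrite -x_r; case: up => /ovs_irr.
- rewrite vsat_vbool vsat_VLt_upd_root //.
  clear beyond; case: up beyond_r; case: (0 < slope n s t) => /= beyond_r;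
    split=> // h; case: (ovs_asym h beyond_r).
- by rewrite /= (IHg qf_f beyond).
- case/andP: qf_f => qf_g qf_h.
  rewrite /= (IHg qf_g) ?(IHh qf_h) // => r r_in; apply: beyond;
    apply: List.in_or_app; by [right|left].
Qed.

Lemma exists_cut_witness e (rs : seq (vterm C)) x :
  [\/ forall r, List.In r rs -> lt x (veval e r),
      forall r, List.In r rs -> lt (veval e r) x |
      exists2 u, List.In u (midpoints rs) &
        forall r, List.In r rs -> same_side (veval e r) x (veval e u)].
Proof.
have [[r [r_in <-]]|off] := classic (exists r, List.In r rs /\ veval e r = x).
  constructor 3; exists (vmid r r); first exact: In_midpoints.
  by move=> r' _; rewrite /= scale_half_double.
have side r : List.In r rs -> lt (veval e r) x \/ lt x (veval e r).
  by move=> r_in; apply: ovs_total => erx; apply: off; exists r.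
have [[r1 [r1_in r1_nlt]]|below] :=
  classic (exists r, List.In r rs /\ ~ lt x (veval e r)); last first.
  by constructor 1 => r r_in; apply: NNPP => nlt; apply: below; exists r.
have [[r2 [r2_in r2_nlt]]|above] :=
  classic (exists r, List.In r rs /\ ~ lt (veval e r) x); last first.
  by constructor 2 => r r_in; apply: NNPP => nlt; apply: above; exists r.
(* Otherwise x lies strictly between the greatest root [m1] below it and the
   least root [m2] above it, and so does their midpoint. *)
have r1_lt : lt (veval e r1) x by case: (side r1 r1_in).
have r2_gt : lt x (veval e r2) by case: (side r2 r2_in).
have [m1 [m1_in m1_lt m1_max]] :=
  @exists_maximal _ (fun a b => lt (veval e a) (veval e b))
    (fun r => lt (veval e r) x) rs (fun a => @ovs_irr _)
    (fun a b c => @ovs_trans _ _ _)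
    (ex_intro _ r1 (conj r1_in r1_lt)).
have [m2 [m2_in m2_gt m2_min]] :=
  @exists_maximal _ (fun a b => lt (veval e b) (veval e a))
    (fun r => lt x (veval e r)) rs (fun a => @ovs_irr _)
    (fun a b c ab bc => ovs_trans bc ab)
    (ex_intro _ r2 (conj r2_in r2_gt)).
have [m1_mid mid_m2] := ovs_midpoint (ovs_trans m1_lt m2_gt).
constructor 3; exists (vmid m1 m2); first exact: In_midpoints.
move=> r r_in; case: (side r r_in) => [rx|xr].
  exact: same_side_above rx (ovs_nlt_lt_trans (m1_max r r_in rx) m1_mid).
exact: same_side_below xr (ovs_lt_nlt_trans mid_m2 (m2_min r r_in xr)).
Qed.

Lemma exists_lower_bound D (T : Type) (val : T -> G) (rs : seq T) :
  subspace D -> (exists2 q, D q & lt 0 q) -> (forall i, List.In i rs -> D (val i)) ->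
  exists2 x, D x & forall i, List.In i rs -> lt x (val i).
Proof.
move=> [D0 DD DZ] [q Dq q_gt0]; elim: rs => [_|a rs IH Drs]; first by exists 0.
have [x Dx x_below] := IH (fun i i_in => Drs i (or_intror i_in)).
have [xa|nxa] := classic (lt x (val a)).
  by exists x => // i [<-|]; last exact: x_below.
have aq_a : lt (val a - q) (val a) by rewrite -ovs_subr_gt0 opprB addrC subrK.
exists (val a - q).
  by apply: DD; [apply: Drs; left | rewrite -scaleN1r; apply: DZ].
move=> i [<-//|i_in]; exact: ovs_trans (ovs_lt_nlt_trans aq_a nxa) (x_below i i_in).
Qed.

Lemma exists_upper_bound D (T : Type) (val : T -> G) (rs : seq T) :
  subspace D -> (exists2 q, D q & lt 0 q) -> (forall i, List.In i rs -> D (val i)) ->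
  exists2 x, D x & forall i, List.In i rs -> lt (val i) x.
Proof.
move=> subD posD Drs; have [_ _ DZ] := subD.
have DN y : D y -> D (- y) by rewrite -scaleN1r; apply: DZ.
have [x Dx x_below] := exists_lower_bound (val := fun i => - val i) subD posD
  (fun i i_in => DN _ (Drs i i_in)).
exists (- x); first exact: DN.
by move=> i /x_below; rewrite -(ovs_subr_gt0 x) -(ovs_subr_gt0 (val i)) addrC.
Qed.

Lemma vsat_elim_ex D e n f : subspace D -> (exists2 q, D q & lt 0 q) ->
  (forall m, D (e m)) -> qfree f ->
  (exists x, D x /\ vsat lt D (upd e n x) f) <-> vsat lt D e (elim_ex n f).
Proof.
move=> subD posD De qf_f; rewrite /elim_ex !vsat_vor vsat_vbigor.
have Droots r : List.In r (roots n f) -> D (veval e r).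
  by move=> _; apply: veval_closed.
split=> [[x [_ fx]]|].
  have [below|above|[u u_in side]] := exists_cut_witness e (roots n f) x.
  - by left; rewrite (vsat_at_infty (up := false) _ qf_f below).
  - by right; left; rewrite (vsat_at_infty (up := true) _ qf_f above).
  - right; right; exists (vfsubst n u f); first exact: List.in_map.
    by rewrite vsat_vfsubst // -(vsat_upd_same_side _ qf_f side).
case=> [|[|[g /List.in_map_iff[u [<- _]]]]].
- have [x Dx below] := exists_lower_bound subD posD Droots.
  by rewrite (vsat_at_infty (up := false) _ qf_f below) => fx; exists x.
- have [x Dx above] := exists_upper_bound subD posD Droots.
  by rewrite (vsat_at_infty (up := true) _ qf_f above) => fx; exists x.
- by rewrite vsat_vfsubst // => fu; exists (veval e u); split=> //; apply: veval_closed.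
Qed.

Lemma vsat_qe D f e : subspace D -> (exists2 q, D q & lt 0 q) ->
  (forall m, D (e m)) -> vsat lt D e f <-> vsat lt D e (qe f).
Proof.
move=> subD posD; elim: f e => [s t|s t|g IHg|g IHg h IHh|n g IHg] e De //.
- by rewrite /= (IHg e De).
- by rewrite /= (IHg e De) (IHh e De).
- rewrite [qe _]/= -vsat_elim_ex ?qfree_qe //.
  have De' x : D x -> forall m, D (upd e n x m).
    by move=> Dx m; rewrite /upd; case: ifP.
  by split=> -[x [Dx gx]]; exists x; split=> //; apply/(IHg _ (De' x Dx)).
Qed.

Lemma vsat_qfree_domain D D' e f : qfree f -> vsat lt D e f <-> vsat lt D' e f.
Proof. by elim: f => //= [g IHg /IHg->|g IHg h IHh /andP[/IHg-> /IHh->]]. Qed.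

Theorem subspace_elem_substructure S :
  subspace S -> (exists2 p, S p & p <> 0) -> elem_substructure lt S.
Proof.
move=> subS [p Sp p0]; have [S0 SD SZ] := subS.
have posS : exists2 q, S q & lt 0 q.
  case: (ovs_gt0_or_opp p0) => p_pos; first by exists p.
  by exists (- p); rewrite // -scaleN1r; apply: SZ.
split=> // f e Se.
rewrite (vsat_qe _ subS posS Se) (@vsat_qe (fun _ => True)) //.
  exact: vsat_qfree_domain (qfree_qe f).
by case: posS => q; exists q.
Qed.

Lemma ext_lt_irr a : ~ ext_lt lt a a.
Proof. by case: a => [x|] //=; apply: ovs_irr. Qed.

Lemma ext_lt_trans a b c : ext_lt lt a b -> ext_lt lt b c -> ext_lt lt a c.
Proof. by case: a b c => [x|] [y|] [z|] //=; apply: ovs_trans. Qed.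

Lemma ext_leNlt a b : ext_le lt a b <-> ~ ext_lt lt b a.
Proof.
split=> [[ab ba|->]|nba]; first exact: ext_lt_irr (ext_lt_trans ab ba).
  exact: ext_lt_irr.
have [->|neq] := classic (a = b); [by right|left].
case: a b neq nba => [x|] [y|] //= neq nba.
by case: (ovs_total (fun xy => neq (congr1 Some xy))).
Qed.

Lemma ext_le_trans a b c : ext_le lt a b -> ext_le lt b c -> ext_le lt a c.
Proof.
move=> [ab|->] [bc|<-]; by [left; apply: ext_lt_trans ab bc|left|left|right].
Qed.

Lemma ext_le_anti a b : ext_le lt a b -> ext_le lt b a -> a = b.
Proof. by move=> [ab|//] /ext_leNlt. Qed.

End OrderedVectorSpace.

Section Valuation.
Variables (C : realFieldType) (G : lmodType C).
Variables (lt0 lt1 : G -> G -> Prop) (v : G -> option G).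
Hypothesis hamel : hamel_space lt0 lt1 v.

Lemma hamel_ordered_vs : ordered_vs lt0.
Proof. by case: hamel => -[]. Qed.
Let ovs0 := hamel_ordered_vs.

Lemma v_eq_None x : v x = None <-> x = 0.
Proof. by case: hamel => -[]. Qed.

Lemma v0 : v 0 = None.
Proof. exact/v_eq_None. Qed.

Lemma v_ultrametric x y :
  ext_le lt0 (v x) (v (x + y)) \/ ext_le lt0 (v y) (v (x + y)).
Proof. by case: hamel => -[]. Qed.

Lemma v_scale (c : C) x : c != 0 -> v (c *: x) = v x.
Proof. by case: hamel => -[] _ _ _ _ h _; apply: h. Qed.

Lemma v_idem x : ext_v v (v x) = v x.
Proof. by case: hamel => _ []. Qed.

Lemma v_opp x : v (- x) = v x.
Proof. by rewrite -scaleN1r v_scale // oppr_eq0 oner_eq0. Qed.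

Lemma v_addr_lt x y : ext_lt lt0 (v x) (v y) -> v (x + y) = v x.
Proof.
move=> vx_lt_vy; apply: (ext_le_anti ovs0).
  have := v_ultrametric (x + y) (- y); rewrite addrK v_opp.
  by case=> // /(ext_leNlt ovs0).
case: (v_ultrametric x y) => // vy_le.
exact: (ext_le_trans ovs0 (or_introl vx_lt_vy) vy_le).
Qed.

Definition vfix (h : G) := v h = Some h.

Lemma vfix_lincomb (s : seq G) (c : 'I_(size s) -> C) :
  uniq s -> (forall x, x \in s -> vfix x) ->
  (forall i, c i = 0) \/
  exists2 h, h \in s & v (\sum_(i < size s) c i *: s`_i) = Some h.
Proof.
elim: s c => [c _ _|x s IH c /= /andP[x_notin_s uniq_s] fix_s]; first by left; case.
have fix_x : v x = Some x := fix_s x (mem_head x s).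
have vcx : c ord0 != 0 -> v (c ord0 *: x) = Some x by move=> c0; rewrite v_scale.
rewrite big_ord_recl /=; under eq_bigr do rewrite add0n.
have fix_tail y : y \in s -> vfix y.
  by move=> y_in; apply: fix_s; rewrite in_cons y_in orbT.
have [tail0|[h h_in vh]] := IH (fun i => c (lift ord0 i)) uniq_s fix_tail.
  rewrite big1 ?addr0 => [|i _]; last by rewrite tail0 scale0r.
  have [c0|c0] := eqVneq (c ord0) 0; last by right; exists x; rewrite ?mem_head ?vcx.
  by left => i; case: (unliftP ord0 i) => [j ->|->].
have h_in' : h \in x :: s by rewrite in_cons h_in orbT.
have [c0|c0] := eqVneq (c ord0) 0.
  by right; exists h; rewrite // c0 scale0r add0r.
have x_h : x <> h by move=> x_h; rewrite x_h h_in in x_notin_s.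
right; case: (ovs_total ovs0 x_h) => [x_lt_h|h_lt_x].
  by exists x; rewrite ?mem_head // v_addr_lt vcx // vh.
by exists h; rewrite // addrC v_addr_lt vh // vcx.
Qed.

Lemma vfix_lin_indep : lin_indep vfix.
Proof.
move=> s c uniq_s fix_s sum0; case: (vfix_lincomb c uniq_s fix_s) => // -[h _].
by rewrite sum0 v0.
Qed.

Lemma vfix_dense : dense_val lt0 v -> dense_in lt0 vfix.
Proof.
move=> dense a b ab; have [c []] := dense a b ab.
case vc: (v c) => [h|] //= ah hb; exists h; split=> //.
by rewrite /vfix -vc -[in RHS]v_idem vc.
Qed.

Definition val_ge (h0 x : G) := ext_le lt0 (Some h0) (v x).

Lemma val_ge_subspace h0 : subspace (val_ge h0).
Proof.
split=> [|x y hx hy|a x hx]; first by left; rewrite v0.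
  by case: (v_ultrametric x y); apply: ext_le_trans.
have [->|a0] := eqVneq a 0; last by rewrite /val_ge v_scale.
by rewrite scale0r; left; rewrite v0.
Qed.

Lemma val_ge_proper h0 : dense_val lt0 v -> (exists x : G, x <> 0) ->
  exists x, ~ val_ge h0 x.
Proof.
move=> dense [y y0].
have [q q_gt0] : exists q, lt0 0 q.
  by case: (ovs_gt0_or_opp ovs0 y0) => ?; [exists y | exists (- y)].
have h0q_h0 : lt0 (h0 - q) h0.
  by rewrite -(ovs_subr_gt0 ovs0) opprB addrC subrK.
have [c [_ vc_h0]] := dense _ _ h0q_h0.
by exists c; rewrite /val_ge (ext_leNlt ovs0).
Qed.

Lemma vfix_definable : ham_definable lt0 lt1 v (in_G vfix).
Proof.
exists (HAnd (HEq (HVal (HVar C 0)) (HVar C 0)) (HNot (HEq (HVar C 0) (HInf C)))).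
exists (fun _ => None) => -[h|] /=; rewrite /upd /=.
  by split=> [fix_h|[]].
by split=> // -[_ []].
Qed.

Lemma val_ge_definable h0 : ham_definable lt0 lt1 v (in_G (val_ge h0)).
Proof.
exists (HAnd (HNot (HLt0 (HVal (HVar C 0)) (HVar C 1)))
             (HNot (HEq (HVar C 0) (HInf C)))).
exists (fun m => if m == 1%N then Some h0 else None) => -[x|] /=; rewrite /upd /=.
  by rewrite /val_ge (ext_leNlt ovs0); split=> [|[]].
by split=> // -[_ []].
Qed.

End Valuation.

Theorem corollary6p1 (C : realFieldType) (G : lmodType C)
    (lt0 lt1 : G -> G -> Prop) (v : G -> option G) :
  ham_model lt0 lt1 v ->
  (exists x : G, x <> 0) ->
  (exists H : G -> Prop,
      [/\ ham_definable lt0 lt1 v (in_G H), lin_indep H & dense_in lt0 H]) /\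
  (exists S : G -> Prop,
      [/\ ham_definable lt0 lt1 v (in_G S), (exists x : G, ~ S x)
        & elem_substructure lt0 S]).
Proof.
move=> [hamel _ dense] nontrivial; split.
  exists (vfix v); split; first exact: vfix_definable.
    exact: vfix_lin_indep hamel.
  exact: vfix_dense hamel dense.
have [y y0] := nontrivial.
have [h0 vy] : exists h0, v y = Some h0.
  by case vy: (v y) => [h|]; [exists h | case: y0; apply/(v_eq_None hamel)].
exists (val_ge lt0 v h0); split.
- exact: val_ge_definable hamel h0.
- exact: val_ge_proper hamel h0 dense nontrivial.
- apply: subspace_elem_substructure (val_ge_subspace hamel h0) _.
    exact: hamel_ordered_vs hamel.
  by exists y => //; rewrite /val_ge vy; right.
Qed.
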